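(* In the setting below, the curvature $R(a,b)=[\hat\nabla_a,\hat\nabla_b]-\hat\nabla_{\{a,b\}}$ of the preconnection $\hat\nabla$ satisfies, for $v,w,z\in\mathfrak g$ and $f,h,k\in C^\infty(N)$: $$R(v,w)({\rm d}z)=-\tfrac14{\rm d}[[v,w],z],\qquad R(v,w)({\rm d}h)=0,$$ $$R(v,h)({\rm d}z)=R(v,h)({\rm d}k)=0,\qquad R(f,h)({\rm d}z)=R(f,h)({\rm d}k)=0.$$
   Context: A Lie group with Lie algebra $\mathfrak g$ acts on a manifold $N$, with induced (Lie algebra) action $\xi\triangleright f$ on $C^\infty(N)$. On $C^\infty(N)\otimes S(\mathfrak g)\subset C^\infty(N\times\mathfrak g^* )$ the Poisson bracket is determined by $\{f,h\}=0$, $\{v,f\}=v\triangleright f$, $\{v,w\}=[v,w]$ ($f,h\in C^\infty(N)$, $v,w\in\mathfrak g$ viewed as linear functions on $\mathfrak g^*$). $\hat\nabla$ is the preconnection (i.e. $\hat\nabla_a(b\xi)=\{a,b\}\xi+b\hat\nabla_a\xi$, $\hat\nabla_{ab}=a\hat\nabla_b+b\hat\nabla_a$) determined by $\hat\nabla_v{\rm d}w=\frac12{\rm d}[v,w]$, $\hat\nabla_v{\rm d}h={\rm d}(v\triangleright h)$, $\hat\nabla_f{\rm d}w=0$, $\hat\nabla_f{\rm d}h=0$. *)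

From HB Require Import structures.
From mathcomp Require Import all_boot all_order all_algebra.
Set Implicit Arguments. Unset Strict Implicit. Unset Printing Implicit Defensive.
Import Order.TTheory GRing.Theory Num.Theory.
Local Open Scope ring_scope.

Definition lie_bracket (K : fieldType) (g : lmodType K) (br : g -> g -> g) :=
  [/\ forall (a : K) x y z, br (a *: x + y) z = a *: br x z + br y z,
      forall x y, br x y = - br y x &
      forall x y z, br x (br y z) + br y (br z x) + br z (br x y) = 0].

Definition lie_action (K : fieldType) (g : lmodType K) (C : comAlgType K)
    (br : g -> g -> g) (act : g -> C -> C) :=
  [/\ forall (a : K) v w f, act (a *: v + w) f = a *: act v f + act w f,
      forall (a : K) v f h, act v (a *: f + h) = a *: act v f + act v h,
      forall v f h, act v (f * h) = act v f * h + f * act v h &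
      forall v w f, act (br v w) f = act v (act w f) - act w (act v f)].

Definition poisson_bracket (K : fieldType) (A : comAlgType K) (pb : A -> A -> A) :=
  [/\ forall (k : K) a b c, pb (k *: a + b) c = k *: pb a c + pb b c,
      forall a b, pb a b = - pb b a,
      forall a b c, pb a (b * c) = pb a b * c + b * pb a c &
      forall a b c, pb a (pb b c) + pb b (pb c a) + pb c (pb a b) = 0].

(* [d : A -> Om] is a K-linear derivation into the A-module Om
   (exterior derivative into 1-forms). *)
Definition kderivation (K : fieldType) (A : comAlgType K) (Om : lmodType A)
    (d : A -> Om) :=
  (forall (k : K) a b, d (k *: a + b) = k%:A *: d a + d b) /\
  (forall a b, d (a * b) = a *: d b + b *: d a).

Definition preconnection (K : fieldType) (A : comAlgType K) (Om : lmodType A)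
    (pb : A -> A -> A) (nabla : A -> Om -> Om) :=
  [/\ forall a (xi eta : Om), nabla a (xi + eta) = nabla a xi + nabla a eta,
      forall a b (xi : Om), nabla a (b *: xi) = pb a b *: xi + b *: nabla a xi,
      forall a b (xi : Om), nabla (a * b) xi = a *: nabla b xi + b *: nabla a xi &
      forall (k : K) a b (xi : Om),
        nabla (k *: a + b) xi = k%:A *: nabla a xi + nabla b xi].

Definition curvature (K : fieldType) (A : comAlgType K) (Om : lmodType A)
    (pb : A -> A -> A) (nabla : A -> Om -> Om) (a b : A) (xi : Om) : Om :=
  nabla a (nabla b xi) - nabla b (nabla a xi) - nabla (pb a b) xi.

From HB Require Import structures.
From mathcomp Require Import all_boot all_order all_algebra.
From mathcomp Require Import ring.
Set Implicit Arguments. Unset Strict Implicit. Unset Printing Implicit Defensive.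
Import Order.TTheory GRing.Theory Num.Theory.
Local Open Scope ring_scope.

(* Scalars of K commute with every nabla_a because {a, k} = 0 for constants k;
   the terms of R(v,w)(dz) then combine via the Jacobi identity
   [v,[w,z]] - [w,[v,z]] = [[v,w],z] into (1/4 - 1/2) d[[v,w],z], those of
   R(v,w)(dh) cancel because the action is a Lie algebra morphism, and in all
   the other cases every term vanishes. *)

Lemma addr_idem0 (V : zmodType) (x : V) : x + x = x -> x = 0.
Proof. by move=> xx; apply: (@addrI _ x); rewrite addr0. Qed.

Section LieBracket.
Variables (K : fieldType) (g : lmodType K) (br : g -> g -> g).
Hypothesis brP : lie_bracket br.

Lemma br0l y : br 0 y = 0.
Proof.
case: brP => brL _ _; apply: addr_idem0.
by have := brL 1 0 0 y; rewrite !scale1r addr0 => <-.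
Qed.

Lemma brNl x y : br (- x) y = - br x y.
Proof.
case: brP => brL _ _.
by have := brL (-1) x 0 y; rewrite addr0 br0l addr0 !scaleN1r.
Qed.

Lemma brNr x y : br x (- y) = - br x y.
Proof. by case: brP => _ brA _; rewrite brA brNl -brA. Qed.

Lemma br_leibniz x y z : br x (br y z) = br (br x y) z + br y (br x z).
Proof.
case: brP => _ brA brJ; have := brJ x y z.
rewrite [br z (br x y)]brA [br z x]brA brNr => jacobi.
by apply/eqP; rewrite addrC -subr_eq0 -jacobi opprD addrA eqxx.
Qed.

End LieBracket.

Section PoissonBracket.
Variables (K : fieldType) (A : comAlgType K) (pb : A -> A -> A).
Hypothesis pbP : poisson_bracket pb.

Lemma pb0l a : pb 0 a = 0.
Proof.
case: pbP => pbL _ _ _; apply: addr_idem0.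
by rewrite -{1}[pb 0 a]scale1r -pbL scale1r addr0.
Qed.

Lemma pb1r a : pb a 1 = 0.
Proof.
case: pbP => _ _ pbD _; apply: addr_idem0.
by rewrite -{3}[1](mul1r 1) pbD mulr1 mul1r.
Qed.

Lemma pb_algr a (k : K) : pb a k%:A = 0.
Proof.
case: pbP => pbL pbA _ _.
by rewrite pbA -[k%:A]addr0 pbL pb0l addr0 pbA pb1r oppr0 scaler0 oppr0.
Qed.

End PoissonBracket.

Section Preconnection.
Variables (K : fieldType) (A : comAlgType K) (Om : lmodType A).
Variables (pb : A -> A -> A) (nabla : A -> Om -> Om).
Hypotheses (pbP : poisson_bracket pb) (nablaP : preconnection pb nabla).

Lemma nabla0r a : nabla a 0 = 0.
Proof. by case: nablaP => nD _ _ _; apply: addr_idem0; rewrite -nD addr0. Qed.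

Lemma nabla0l xi : nabla 0 xi = 0.
Proof.
by case: nablaP => _ _ nM _; have := nM 0 0 xi; rewrite mul0r !scale0r addr0.
Qed.

Lemma nabla_algZ a (k : K) xi : nabla a (k%:A *: xi) = k%:A *: nabla a xi.
Proof. by case: nablaP => _ nS _ _; rewrite nS pb_algr // scale0r add0r. Qed.

End Preconnection.

Section Derivation.
Variables (K : fieldType) (A : comAlgType K) (Om : lmodType A) (d : A -> Om).
Hypothesis dP : kderivation d.

Lemma derD a b : d (a + b) = d a + d b.
Proof. by case: dP => dL _; have := dL 1 a b; rewrite !scale1r. Qed.

Lemma der0 : d 0 = 0.
Proof. by apply: addr_idem0; rewrite -derD addr0. Qed.

Lemma derN a : d (- a) = - d a.
Proof. by apply/eqP; rewrite -addr_eq0 -derD addNr der0. Qed.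

Lemma derB a b : d (a - b) = d a - d b.
Proof. by rewrite derD derN. Qed.

End Derivation.

Section Curvature.
Variables (K : fieldType) (g : lmodType K) (C A : comAlgType K) (Om : lmodType A).
Variables (br : g -> g -> g) (act : g -> C -> C).
Variables (iC : {lrmorphism C -> A}) (ig : {linear g -> A}).
Variables (pb : A -> A -> A) (d : A -> Om) (nabla : A -> Om -> Om).
Hypotheses (brP : lie_bracket br) (actP : lie_action br act).
Hypotheses (pbP : poisson_bracket pb) (dP : kderivation d).
Hypothesis nablaP : preconnection pb nabla.
Hypothesis pbCC : forall f h, pb (iC f) (iC h) = 0.
Hypothesis pbgC : forall v f, pb (ig v) (iC f) = iC (act v f).
Hypothesis pbgg : forall v w, pb (ig v) (ig w) = ig (br v w).
Hypothesis nabla_gg : forall v w,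
  nabla (ig v) (d (ig w)) = (2^-1 : K)%:A *: d (ig (br v w)).
Hypothesis nabla_gC : forall v h, nabla (ig v) (d (iC h)) = d (iC (act v h)).
Hypothesis nabla_Cg : forall f w, nabla (iC f) (d (ig w)) = 0.
Hypothesis nabla_CC : forall f h, nabla (iC f) (d (iC h)) = 0.

Lemma curvature_gg_dg v w z : 2%:R != 0 :> K ->
  curvature pb nabla (ig v) (ig w) (d (ig z))
    = - ((4^-1 : K)%:A *: d (ig (br (br v w) z))).
Proof.
move=> two_neq0; rewrite /curvature pbgg !nabla_gg.
rewrite !(nabla_algZ pbP nablaP) !nabla_gg.
rewrite (br_leibniz brP) linearD (derD dP) /= !scalerA scalerDr.
rewrite addrK -scalerBl -[RHS]scaleNr; congr (_ *: _).
rewrite mulr_algl scalerA -scalerBl -[RHS]scaleNr; congr (_ *: _).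
by field; rewrite -[4%:R]/((2 * 2)%:R : K) natrM mulf_neq0.
Qed.

Lemma curvature_gg_dC v w h :
  curvature pb nabla (ig v) (ig w) (d (iC h)) = 0.
Proof.
case: actP => _ _ _ actB.
rewrite /curvature pbgg !nabla_gC -!(derB dP) -!raddfB -actB.
by rewrite subrr raddf0 (der0 dP).
Qed.

Lemma curvature_gC_dg v h z :
  curvature pb nabla (ig v) (iC h) (d (ig z)) = 0.
Proof.
rewrite /curvature pbgC nabla_gg (nabla_algZ pbP nablaP) !nabla_Cg.
by rewrite (nabla0r nablaP) scaler0 !subr0.
Qed.

Lemma curvature_gC_dC v h k :
  curvature pb nabla (ig v) (iC h) (d (iC k)) = 0.
Proof. by rewrite /curvature pbgC nabla_gC !nabla_CC (nabla0r nablaP) !subr0. Qed.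

Lemma curvature_CC_dg f h z :
  curvature pb nabla (iC f) (iC h) (d (ig z)) = 0.
Proof.
rewrite /curvature pbCC !nabla_Cg.
by rewrite !(nabla0r nablaP) (nabla0l nablaP) !subr0.
Qed.

Lemma curvature_CC_dC f h k :
  curvature pb nabla (iC f) (iC h) (d (iC k)) = 0.
Proof.
rewrite /curvature pbCC !nabla_CC.
by rewrite !(nabla0r nablaP) (nabla0l nablaP) !subr0.
Qed.

End Curvature.

Theorem proposition6p1p4
  (K : realFieldType) (g : lmodType K) (C : comAlgType K) (A : comAlgType K)
  (Om : lmodType A)
  (br : g -> g -> g) (act : g -> C -> C)
  (iC : {lrmorphism C -> A}) (ig : {linear g -> A})
  (pb : A -> A -> A) (d : A -> Om) (nabla : A -> Om -> Om) :
  lie_bracket br ->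
  lie_action br act ->
  poisson_bracket pb ->
  (forall f h, pb (iC f) (iC h) = 0) ->
  (forall v f, pb (ig v) (iC f) = iC (act v f)) ->
  (forall v w, pb (ig v) (ig w) = ig (br v w)) ->
  kderivation d ->
  preconnection pb nabla ->
  (forall v w, nabla (ig v) (d (ig w)) = (2^-1 : K)%:A *: d (ig (br v w))) ->
  (forall v h, nabla (ig v) (d (iC h)) = d (iC (act v h))) ->
  (forall f w, nabla (iC f) (d (ig w)) = 0) ->
  (forall f h, nabla (iC f) (d (iC h)) = 0) ->
  forall (v w z : g) (f h k : C),
  (curvature pb nabla (ig v) (ig w) (d (ig z))
        = - ((4^-1 : K)%:A *: d (ig (br (br v w) z))) /\
      curvature pb nabla (ig v) (ig w) (d (iC h)) = 0 /\
      curvature pb nabla (ig v) (iC h) (d (ig z)) = 0 /\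
      curvature pb nabla (ig v) (iC h) (d (iC k)) = 0 /\
      curvature pb nabla (iC f) (iC h) (d (ig z)) = 0 /\
      curvature pb nabla (iC f) (iC h) (d (iC k)) = 0).
Proof.
move=> brP actP pbP pbCC pbgC pbgg dP nablaP nabla_gg nabla_gC nabla_Cg nabla_CC
  v w z f h k.
have two_neq0 : 2%:R != 0 :> K by rewrite pnatr_eq0.
split; first exact: curvature_gg_dg brP pbP dP nablaP pbgg nabla_gg _ _ _ two_neq0.
split; first exact: curvature_gg_dC actP dP pbgg nabla_gC v w h.
split; first exact: curvature_gC_dg pbP nablaP pbgC nabla_gg nabla_Cg v h z.
split; first exact: curvature_gC_dC nablaP pbgC nabla_gC nabla_CC v h k.
split; first exact: curvature_CC_dg nablaP pbCC nabla_Cg f h z.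
exact: curvature_CC_dC nablaP pbCC nabla_CC f h k.
Qed.
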